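(* Let $d$ be a positive integer and let $X_1,\dots,X_d$ be i.i.d. random variables taking natural number values. Let $\kappa=\min\{n\in\mathbb{N}:\Pr[X_1>n]<1/d\}$. Then $$\mathbb{E}[\max(X_1,\dots,X_d)]=\Theta\Big(\kappa+d\sum_{n=\kappa}^\infty\Pr[X_1>n]\Big),$$ with universal constants. *)

From HB Require Import structures.
From mathcomp Require Import all_boot all_order all_algebra.
From mathcomp Require Import all_classical all_reals all_analysis.
Set Implicit Arguments. Unset Strict Implicit. Unset Printing Implicit Defensive.
Import Order.TTheory GRing.Theory Num.Theory.
Local Open Scope classical_set_scope.
Local Open Scope ring_scope.
Local Open Scope ereal_scope.

Definition nat_rvs {d0 : measure_display} {T : measurableType d0}
  (d : nat) (X : 'I_d -> T -> nat) : Prop :=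
  forall (i : 'I_d) (n : nat), measurable [set x | X i x = n].

Definition mutually_independent {d0 : measure_display} {T : measurableType d0}
  {R : realType} (P : probability T R) (d : nat) (X : 'I_d -> T -> nat) : Prop :=
  forall A : 'I_d -> set nat,
    P [set x | forall i, A i (X i x)] = \prod_(i < d) P (X i @^-1` A i).

Definition identically_distributed {d0 : measure_display} {T : measurableType d0}
  {R : realType} (P : probability T R) (d : nat) (X : 'I_d -> T -> nat) : Prop :=
  forall (i j : 'I_d) (A : set nat), P (X i @^-1` A) = P (X j @^-1` A).

(* Write p n for P (X_1 > n).  By independence P (max_i X_i > n) = 1 - (1 - p n)^d,
   and the Bernoulli-type bound (1 - r)^d (1 + d r) <= 1 shows that this is at least
   min(1, d p n) / 2.  Summing the tail formula E Y = sum_n P (Y > n) gives the lower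
   bound, since d p n >= 1 exactly for n < kappa.  The upper bound comes from
   max_i X_i <= kappa + sum_i (X_i - kappa)_+ and E (X_i - kappa)_+ = sum_(n >= kappa) p n. *)

From HB Require Import structures.
From mathcomp Require Import all_boot all_order all_algebra.
From mathcomp Require Import all_classical all_reals all_analysis.
From mathcomp Require Import measurable_realfun ring lra zify.
Import Order.TTheory GRing.Theory Num.Theory.
Local Open Scope classical_set_scope.
Local Open Scope ring_scope.
Local Open Scope ereal_scope.

Section nat_valued_measurability.
Context {d0 : measure_display} {T : measurableType d0}.

Lemma measurable_ltn_of_eq (Y : T -> nat) :
  (forall n, measurable [set x | Y x = n]) ->
  forall n, measurable [set x | (n < Y x)%N].
Proof.
move=> mY n.
have -> : [set x | (n < Y x)%N] = \bigcup_k [set x | Y x = (k + n.+1)%N].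
  apply/seteqP; split => x /=.
  - by move=> ltnY; exists (Y x - n.+1)%N => //=; rewrite subnK.
  - by case=> k _ /= ->; rewrite ltn_addl.
exact: bigcupT_measurable.
Qed.

Lemma measurable_eq_of_ltn (Y : T -> nat) :
  (forall n, measurable [set x | (n < Y x)%N]) ->
  forall n, measurable [set x | Y x = n].
Proof.
move=> mY [|n].
  have -> : [set x | Y x = 0%N] = ~` [set x | (0 < Y x)%N].
    apply/seteqP; split => x /=; first by move=> ->.
    by move/negP; rewrite lt0n negbK => /eqP.
  exact/measurableC/mY.
have -> : [set x | Y x = n.+1] = [set x | (n < Y x)%N] `\` [set x | (n.+1 < Y x)%N].
  by apply/seteqP; split => x /=; [move=> ->; rewrite ltnn | case=> ? /negP ?]; lia.
exact: measurableD.
Qed.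

Lemma measurable_fun_comp_nat {R : realType} (Y : T -> nat) (g : nat -> \bar R) :
  (forall n, measurable [set x | (n < Y x)%N]) -> measurable_fun [set: T] (g \o Y).
Proof.
move=> /measurable_eq_of_ltn mY _ B _; rewrite setTI.
have -> : (g \o Y) @^-1` B = \bigcup_(k in [set k | B (g k)]) [set x | Y x = k].
  by apply/seteqP; split => x /=; [exists (Y x) | case=> k /= + ->].
exact: bigcup_measurable.
Qed.

Lemma measurable_ltn_bigmax {d : nat} {X : 'I_d -> T -> nat} :
  (forall i n, measurable [set x | (n < X i x)%N]) ->
  forall n, measurable [set x | (n < \max_(i < d) X i x)%N].
Proof.
move=> mX n.
have -> : [set x | (n < \max_(i < d) X i x)%N] =
          \big[setU/set0]_(i < d) [set x | (n < X i x)%N].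
  apply/seteqP; split => x /=.
  - rewrite ltnNge => /bigmax_leqP ltnX; rewrite -bigcup_seq.
    apply: contrapT => nX; apply: ltnX => i _; rewrite leqNgt.
    by apply/negP => ltni; apply: nX; exists i => //=; rewrite mem_index_enum.
  - rewrite -bigcup_seq => -[i _ /= ltni].
    exact: leq_trans ltni (@leq_bigmax _ (fun j => X j x) i).
exact: bigsetU_measurable.
Qed.

End nat_valued_measurability.

Lemma natr_subn_eseries {R : realType} (k m : nat) :
  ((k - m)%N%:R : R)%:E = \sum_(n <oo) ((n + m < k)%N%:R : R)%:E.
Proof.
rewrite (@nneseries_split _ _ 0 (k - m)) ?add0n; last by move=> j _; rewrite lee_fin.
rewrite eseries0 ?adde0; last by move=> i ? _; have -> : (i + m < k)%N = false by lia.
rewrite sumEFin (@eq_big_nat _ _ _ 0 (k - m) _ (fun _ => 1%R)) ?sumr_const_nat ?subn0//.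
by move=> i ?; have -> : (i + m < k)%N = true by lia.
Qed.

Lemma integral_subn_tail {d0 : measure_display} {T : measurableType d0} {R : realType}
  (mu : {measure set T -> \bar R}) (Y : T -> nat) (m : nat) :
  (forall n, measurable [set x | (n < Y x)%N]) ->
  \int[mu]_x ((Y x - m)%N%:R : R)%:E = \sum_(m <= n <oo) mu [set x | (n < Y x)%N].
Proof.
move=> mY; rewrite -nneseries_addn//.
pose tail n := [set x | (n + m < Y x)%N].
transitivity (\int[mu]_x \sum_(n <oo) (\1_(tail n) x : R)%:E).
  apply: eq_integral => x _; rewrite natr_subn_eseries; apply: eq_eseriesr => n _.
  rewrite indicE; case: (boolP (x \in tail n)) => [/set_mem/= -> //|].
  by rewrite notin_setE /= => /negP/negbTE ->.
rewrite integral_nneseries//; last first.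
  by move=> n; apply/measurable_EFinP/measurable_indic; exact: mY.
by apply: eq_eseriesr => n _; rewrite integral_indic ?setIT//; exact: mY.
Qed.

Section one_minus_power.
Local Open Scope ring_scope.
Context {R : realFieldType} (r : R) (d : nat).
Hypotheses (r_ge0 : 0 <= r) (r_le1 : r <= 1).

Lemma onem_expr_mul_le1 : (1 - r) ^+ d * (1 + d%:R * r) <= 1.
Proof.
elim: d => [|n IHn]; first by rewrite expr0 mul0r addr0 mul1r.
have y_ge0 : 0 <= (1 - r) ^+ n by rewrite exprn_ge0 // subr_ge0.
rewrite exprS -natr1; set y := (1 - r) ^+ n in y_ge0 IHn *.
have : 0 <= y * (n%:R * r ^+ 2 + r ^+ 2).
  by rewrite mulr_ge0 // addr_ge0 ?mulr_ge0 ?sqr_ge0.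
have -> : (1 - r) * y * (1 + (n%:R + 1) * r) =
          y * (1 + n%:R * r) - y * (n%:R * r ^+ 2 + r ^+ 2) by rewrite expr2; ring.
lra.
Qed.

Lemma mul_le_onem_expr : d%:R * r <= (1 + d%:R * r) * (1 - (1 - r) ^+ d).
Proof. by have := onem_expr_mul_le1; lra. Qed.

Lemma onem_expr_ge_half : 1 <= d%:R * r -> 1 <= 2 * (1 - (1 - r) ^+ d).
Proof.
have := mul_le_onem_expr; have : 0 <= (1 - r) ^+ d by rewrite exprn_ge0 // subr_ge0.
set y := (1 - r) ^+ d; set t := d%:R * r; nra.
Qed.

Lemma onem_expr_ge_half_mul : d%:R * r <= 1 -> d%:R * r <= 2 * (1 - (1 - r) ^+ d).
Proof.
have := mul_le_onem_expr; have : 0 <= d%:R * r by rewrite mulr_ge0.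
set y := (1 - r) ^+ d; set t := d%:R * r; nra.
Qed.

End one_minus_power.

Section maximum_of_iid.
Context {d0 : measure_display} {T : measurableType d0} {R : realType}.
Context {P : probability T R} {d : nat} {X : 'I_d -> T -> nat} {p : nat -> R}.
Hypothesis X_rv : nat_rvs X.
Hypothesis X_tail : forall i n, P [set x | (n < X i x)%N] = (p n)%:E.

Let EMax := \int[P]_x ((\max_(i < d) X i x)%N%:R : R)%:E.

Let measurable_tail i n : measurable [set x | (n < X i x)%N].
Proof. exact: measurable_ltn_of_eq. Qed.

Lemma integral_bigmax_le (kappa : nat) :
  EMax <= (kappa%:R : R)%:E + (d%:R : R)%:E * \sum_(kappa <= n <oo) (p n)%:E.
Proof.
pose excess i x := ((X i x - kappa)%N%:R : R)%:E.
have m_excess i : measurable_fun setT (excess i).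
  exact: (measurable_fun_comp_nat (X i) (fun k => ((k - kappa)%N%:R : R)%:E)).
have max_le x : ((\max_(i < d) X i x)%N%:R : R)%:E <=
                cst (kappa%:R : R)%:E x + \sum_(i < d) excess i x.
  rewrite /cst sumEFin -EFinD lee_fin -natr_sum -natrD ler_nat.
  by apply/bigmax_leqP => i _; rewrite (bigD1 i) //=; lia.
apply: (@le_trans _ _ (\int[P]_x (cst (kappa%:R : R)%:E x + \sum_(i < d) excess i x))).
  apply: ge0_le_integral => //.
  - exact: (measurable_fun_comp_nat (fun x => (\max_(i < d) X i x)%N)
             (fun k => (k%:R : R)%:E) (measurable_ltn_bigmax measurable_tail)).
  - exact/emeasurable_funD/emeasurable_sum.
rewrite ge0_integralD //; last 3 first.
- by move=> x _; rewrite lee_fin.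
- by move=> x _; apply: sume_ge0 => i _; rewrite lee_fin.
- exact: emeasurable_sum.
(* [integral_cst] exposes [P] as a bare measure, where [probability_setT] does not rewrite. *)
have P_setT : (P : {measure set T -> \bar R}) setT = 1 := probability_setT P.
rewrite integral_cst // P_setT mule1 ge0_integral_sum //; last first.
  by move=> i x _; rewrite lee_fin.
rewrite (eq_bigr (fun _ => \sum_(kappa <= n <oo) (p n)%:E)); last first.
  by move=> i _; rewrite integral_subn_tail //; apply: eq_eseriesr => n _; exact: X_tail.
by rewrite big_const_ord iter_addr adde0 mule_natl.
Qed.

Hypothesis X_indep : mutually_independent P X.

Lemma prob_bigmax_gt n :
  P [set x | (n < \max_(i < d) X i x)%N] = (1 - (1 - p n) ^+ d)%:E.
Proof.
pose all_le := [set x | forall i, [set k | (k <= n)%N] (X i x)].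
have max_gtE : [set x | (n < \max_(i < d) X i x)%N] = ~` all_le.
  apply/seteqP; split => x /=; rewrite ltnNge.
  - by move=> /negP max_gt le_n; apply/max_gt/bigmax_leqP => i _; exact: le_n.
  - by move=> not_le; apply/negP => /bigmax_leqP le_n; apply: not_le => i; exact: le_n.
have m_all_le : measurable all_le.
  by rewrite -[all_le]setCK -max_gtE; exact/measurableC/measurable_ltn_bigmax.
have le_tail i : X i @^-1` [set k | (k <= n)%N] = ~` [set x | (n < X i x)%N].
  apply/seteqP; split => x /=; first by rewrite leqNgt => /negP.
  by move/negP; rewrite -leqNgt.
have P_all_le : P all_le = \prod_(i < d) P (X i @^-1` [set k | (k <= n)%N]).
  exact: X_indep.
rewrite max_gtE probability_setC // P_all_le.
under eq_bigr do rewrite le_tail probability_setC // X_tail -EFinB.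
by rewrite prodEFin prodr_const card_ord -EFinB.
Qed.

Hypothesis d_gt0 : (0 < d)%N.

Let p_itv n : (0 <= p n <= 1)%R.
Proof.
have m_tail := measurable_tail (Ordinal d_gt0) n.
by rewrite -2!lee_fin -(X_tail (Ordinal d_gt0)) measure_ge0 probability_le1.
Qed.

Let q n := (1 - (1 - p n) ^+ d)%R.

Let q_ge0 n : (0 <= q n)%R.
Proof.
have /andP[p0 p1] := p_itv n.
by rewrite /q subr_ge0 exprn_ile1 // ?subr_ge0 // lerBlDr lerDl.
Qed.

Lemma integral_bigmax_tail_sum : EMax = \sum_(n <oo) (q n)%:E.
Proof.
transitivity (\int[P]_x (((\max_(i < d) X i x) - 0)%N%:R : R)%:E).
  by apply: eq_integral => x _; rewrite subn0.
rewrite integral_subn_tail; last exact: measurable_ltn_bigmax.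
by apply: eq_eseriesr => n _; exact: prob_bigmax_gt.
Qed.

Lemma integral_bigmax_ge (kappa : nat) :
  (forall n, (n < kappa)%N -> 1 <= d%:R * p n)%R ->
  (forall n, (kappa <= n)%N -> d%:R * p n <= 1)%R ->
  (kappa%:R : R)%:E + (d%:R : R)%:E * \sum_(kappa <= n <oo) (p n)%:E
    <= (2%:R : R)%:E * EMax.
Proof.
move=> dp_ge1 dp_le1.
have q_ge0E n : 0 <= (q n)%:E by rewrite lee_fin.
rewrite integral_bigmax_tail_sum (nneseries_split 0 kappa) // add0n.
rewrite ge0_muleDr //; last 2 first.
- exact: sume_ge0.
- exact: nneseries_ge0.
apply: leeD.
- have -> : (kappa%:R : R)%:E = \sum_(0 <= n < kappa) (1 : R)%:E.
    by rewrite sumEFin sumr_const_nat subn0.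
  rewrite ge0_sume_distrr // big_nat_cond [X in _ <= X]big_nat_cond.
  apply: lee_sum => n /andP[/andP[_ n_lt] _]; have /andP[p0 p1] := p_itv n.
  by rewrite -EFinM lee_fin onem_expr_ge_half // dp_ge1.
- have dp_ge0 n : 0 <= (d%:R : R)%:E * (p n)%:E.
    by case/andP: (p_itv n) => p0 _; rewrite -EFinM lee_fin mulr_ge0.
  rewrite -nneseriesZl; last by move=> n _; case/andP: (p_itv n); rewrite lee_fin.
  rewrite -nneseriesZl // -(nneseries_addn _ dp_ge0).
  rewrite -[X in _ <= X]nneseries_addn; last first.
    by move=> n; apply: mule_ge0; rewrite ?lee_fin.
  apply: lee_nneseries => [n _ _|n _]; first exact: dp_ge0.
  have /andP[p0 p1] := p_itv (n + kappa).
  by rewrite -!EFinM lee_fin onem_expr_ge_half_mul // dp_le1 // leq_addl.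
Qed.

End maximum_of_iid.

Theorem mainTheorem6 :
  exists C : nat, (0 < C)%N /\
  forall (R : realType) (d0 : measure_display) (T : measurableType d0)
    (P : probability T R) (d : nat) (hd : (0 < d)%N)
    (X : 'I_d -> T -> nat),
    nat_rvs X -> mutually_independent P X -> identically_distributed P X ->
    forall kappa : nat,
      P [set x | (kappa < X (Ordinal hd) x)%N] < ((d%:R : R)^-1)%:E ->
      (forall m : nat, (m < kappa)%N ->
          ((d%:R : R)^-1)%:E <= P [set x | (m < X (Ordinal hd) x)%N]) ->
    let EMax := \int[P]_x (((\max_(i < d) X i x)%N)%:R : R)%:E in
    let S := (kappa%:R : R)%:E
             + (d%:R : R)%:E * \sum_(kappa <= n <oo) P [set x | (n < X (Ordinal hd) x)%N] in
    S <= (C%:R : R)%:E * EMax /\ EMax <= (C%:R : R)%:E * S.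
Proof.
exists 2%N; split => // R d0 T P d d_gt0 X X_rv X_indep X_iid kappa.
set X0 := X (Ordinal d_gt0) => tail_kappa tail_lt_kappa EMax S.
pose p n := fine (P [set x | (n < X0 x)%N]).
have m_tail n : measurable [set x | (n < X0 x)%N].
  by apply: measurable_ltn_of_eq => m; exact: X_rv.
have tailE n : P [set x | (n < X0 x)%N] = (p n)%:E.
  by rewrite fineK //; exact: fin_num_measure.
have X_tail i n : P [set x | (n < X i x)%N] = (p n)%:E.
  by rewrite -tailE; exact: (X_iid i _ [set k | (n < k)%N]).
have SE : S = (kappa%:R : R)%:E + (d%:R : R)%:E * \sum_(kappa <= n <oo) (p n)%:E.
  by rewrite /S; congr (_ + _ * _); apply: eq_eseriesr => n _.
have d_pos : (0 < d%:R :> R)%R by rewrite ltr0n.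
have dp_ge1 n : (n < kappa)%N -> (1 <= d%:R * p n)%R.
  by move/tail_lt_kappa; rewrite tailE lee_fin -ler_pdivrMl // mulr1.
have dp_le1 n : (kappa <= n)%N -> (d%:R * p n <= 1)%R.
  move=> le_kn; apply/ltW; rewrite -ltr_pdivlMl // mulr1 -lte_fin -tailE.
  apply: le_lt_trans tail_kappa; apply: le_measure; rewrite ?inE //.
  by move=> x /=; exact: leq_ltn_trans.
have S_ge0 : 0 <= S.
  by rewrite SE adde_ge0 ?mule_ge0 ?nneseries_ge0 // => n *; rewrite -tailE.
split; first by rewrite SE; exact: integral_bigmax_ge.
apply: le_trans (integral_bigmax_le X_rv X_tail kappa) _.
by rewrite -SE mule_natl; exact: leeDl.
Qed.
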